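(* Let $\mathbf{X}$ be a finite collection of discrete random variables, and let $B_1,\dots,B_m$ be buckets with associated variable sets $\mathbf{X}_{B_1},\dots,\mathbf{X}_{B_m}\subseteq\mathbf{X}$ that are pairwise disjoint. Let $\mathbf{X}'=\mathbf{X}\setminus\bigcup_{B}\mathbf{X}_B$. Let $p(\mathbf{X})$ be the distribution of a normalized, smooth, decomposable probabilistic circuit, written as a discrete mixture $$p(\mathbf{x})=\sum_{z}p(z)\prod_{B}p_z(\mathbf{x}_B)\prod_{X_i\in\mathbf{X}'}p_z(x_i),$$ where $Z$ is the discrete latent variable induced by the sum nodes, $p(z)$ is its distribution, each $p_z(\mathbf{X}_B)$ is a categorical distribution over $\mathbf{X}_B$ and each $p_z(X_i)$ is a univariate distribution. Let $q(\mathbf{X})$ be a distribution of the same form $$q(\mathbf{x})=\sum_{z}p(z)\prod_{B}q_z(\mathbf{x}_B)\prod_{X_i\in\mathbf{X}'}p_z(x_i),$$ where each $q_z(\mathbf{X}_B)$ is a categorical distribution over $\mathbf{X}_B$. Then $$H\big(p(\mathbf{X}),q(\mathbf{X})\big)\;\le\;\sum_{B}\mathbb{E}_{z\sim p(Z)}\Big[H\big(p_z(\mathbf{X}_B),q_z(\mathbf{X}_B)\big)\Big]+H\big(p(\mathbf{X}',Z)\big),$$ where $p(\mathbf{x}',z)=p(z)\prod_{X_i\in\mathbf{X}'}p_z(x_i)$.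
   Context: $H(p,q)=-\sum_{\mathbf{x}}p(\mathbf{x})\log q(\mathbf{x})$ denotes cross entropy and $H(p)$ denotes entropy. The buckets arise from linear probabilistic propositional logic constraints of the form $\sum_{i_c}\tau_{i_c}\,p(F_{i_c})\le\alpha_c$, where each $F_{i_c}$ is a propositional formula over Boolean variables $\mathbf{X}_c\subseteq\mathbf{X}$; constraints sharing variables are grouped into the same bucket $B$, and $\mathbf{X}_B=\bigcup_{c\in B}\mathbf{X}_c$, so distinct buckets have disjoint variable sets. The circuit is assumed to keep all variables of a bucket together: for every node $v$ and bucket $B$, if $\mathbf{X}_B\cap\mathrm{scope}(v)\neq\emptyset$ then $\mathbf{X}_B\subseteq\mathrm{scope}(v)$, which yields the displayed mixture form of $p$ with components indexed by the states $z$ of the latent variable $Z$. *)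

From HB Require Import structures.
From mathcomp Require Import all_boot all_order all_algebra.
From mathcomp Require Import all_classical all_reals all_analysis.
Set Implicit Arguments. Unset Strict Implicit. Unset Printing Implicit Defensive.
Import Order.TTheory GRing.Theory Num.Theory.
Local Open Scope ring_scope.

Definition is_dist (R : realType) (T : finType) (p : T -> R) : Prop :=
  (forall x, 0 <= p x) /\ \sum_(x : T) p x = 1.

Definition xent (R : realType) (T : finType) (p q : T -> R) : \bar R :=
  \big[adde/0%E]_(x : T)
     (if p x == 0 then 0%E
      else if q x == 0 then +oo%E
      else (- (p x * ln (q x)))%:E).

Definition ent (R : realType) (T : finType) (p : T -> R) : \bar R := xent p p.

(* Configurations: joint states of each bucket (x_B)_B together with the
   states of the remaining variables X' = (x_i)_i. *)
Definition bconf (m : nat) (TB : 'I_m -> finType) := {dffun forall b : 'I_m, TB b}.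
Definition oconf (n : nat) (TX : 'I_n -> finType) := {dffun forall i : 'I_n, TX i}.

Definition mixture (R : realType) (Z : finType) (m n : nat)
  (TB : 'I_m -> finType) (TX : 'I_n -> finType)
  (pZ : Z -> R) (rB : forall (z : Z) (b : 'I_m), TB b -> R)
  (pX : forall (z : Z) (i : 'I_n), TX i -> R)
  (x : (bconf TB * oconf TX)%type) : R :=
  \sum_(z : Z) pZ z * (\prod_(b < m) rB z b (x.1 b)) * \prod_(i < n) pX z i (x.2 i).

Definition joint_rest (R : realType) (Z : finType) (n : nat)
  (TX : 'I_n -> finType) (pZ : Z -> R) (pX : forall (z : Z) (i : 'I_n), TX i -> R)
  (y : (oconf TX * Z)%type) : R :=
  pZ y.2 * \prod_(i < n) pX y.2 i (y.1 i).

From HB Require Import structures.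
From mathcomp Require Import all_boot all_order all_algebra.
From mathcomp Require Import all_classical all_reals all_analysis.
Import Order.TTheory GRing.Theory Num.Theory.
Local Open Scope ring_scope.

(* Write p(x) = sum_z P_z(x) and q(x) = sum_z Q_z(x), where P_z(x) = p(x, z) and
   Q_z(x) = p(z) prod_B q_z(x_B) prod_i p_z(x_i).  Since Q_z(x) <= q(x) and ln is
   increasing, -p(x) ln q(x) <= sum_z -P_z(x) ln Q_z(x).  The logarithm of Q_z(x)
   splits as sum_B ln q_z(x_B) + ln p(x', z), and summing over x marginalises P_z
   onto p(z) p_z(x_B) and onto p(x', z) respectively, which yields the two terms
   of the bound.  If some q_z with p(z) > 0 vanishes where p_z does not, the
   right-hand side is +oo. *)

Lemma bigA_distr_dffun (R : comNzRingType) (I : finType) (T : I -> finType)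
  (h : forall i, T i -> R) :
  \sum_(f : {dffun forall i, T i}) \prod_i h i (f i) = \prod_i \sum_(y : T i) h i y.
Proof.
pose P i := [ffun y : T i => h i y].
rewrite (reindex (@dffun_of_fprod _ T)); last exact/onW_bij/dffun_of_fprod_bij.
transitivity (\sum_(t : fprod T) \prod_(i in I) P i (t i)).
  by apply: eq_bigr => t _; apply: eq_bigr => i _; rewrite !ffunE.
rewrite big_fprod.
transitivity (\prod_i \sum_(j in tagged_with T i) untag 0 (P i) j); last first.
  apply: eq_bigr => i _; rewrite (big_tag (fun i y => h i y)); apply: eq_bigr => j _.
  by rewrite /untag; case: eqP => // e; rewrite ffunE.
by rewrite bigA_distr_big_dep.
Qed.

Lemma sum_pair (R : nmodType) (A B : finType) (F : A * B -> R) :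
  \sum_(p : A * B) F p = \sum_a \sum_b F (a, b).
Proof. by rewrite pair_bigA; apply: eq_bigr => -[]. Qed.

Section Distributions.
Context {R : realType}.

Lemma dist_le1 (T : finType) (d : T -> R) : is_dist d -> forall x, d x <= 1.
Proof. by move=> [d0 <-] x; rewrite (bigD1 x) //= lerDl sumr_ge0. Qed.

Section ProductDistribution.
Variables (I : finType) (T : I -> finType) (d : forall i, T i -> R).
Hypothesis d_dist : forall i, is_dist (d i).

Lemma sum_prod_dist : \sum_(t : {dffun forall i, T i}) \prod_i d i (t i) = 1.
Proof. by rewrite bigA_distr_dffun big1 // => i _; case: (d_dist i). Qed.

Lemma sum_prod_dist_marginal (f : forall i, T i -> R) i0 :
  \sum_(t : {dffun forall i, T i}) (\prod_i d i (t i)) * f i0 (t i0) =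
  \sum_y d i0 y * f i0 y.
Proof.
pose g i y := d i y * (if i == i0 then f i y else 1).
transitivity (\sum_(t : {dffun forall i, T i}) \prod_i g i (t i)).
  by apply: eq_bigr => t _; rewrite big_split /= -big_mkcond big_pred1_eq.
rewrite bigA_distr_dffun (bigD1 i0) //= [X in _ * X]big1 ?mulr1 => [|i /negPf i_neq0].
  by apply: eq_bigr => y _; rewrite /g eqxx.
by rewrite /g; under eq_bigr do rewrite i_neq0 mulr1; case: (d_dist i).
Qed.

End ProductDistribution.

Lemma ln_prod (I : Type) (r : seq I) (P : pred I) (F : I -> R) :
  (forall i, P i -> 0 < F i) ->
  ln (\prod_(i <- r | P i) F i) = \sum_(i <- r | P i) ln (F i).
Proof.
move=> F_gt0; elim: r => [|i r IH]; first by rewrite !big_nil ln1.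
rewrite !big_cons; case: ifP => // Pi.
by rewrite lnM ?posrE ?IH ?F_gt0 // prodr_gt0.
Qed.

Lemma neg_mul_ln_sum_le (I : finType) (P Q : I -> R) :
  (forall i, 0 <= P i) -> (forall i, 0 <= Q i) ->
  (forall i, P i != 0 -> Q i != 0) ->
  - ((\sum_i P i) * ln (\sum_i Q i)) <= \sum_i - (P i * ln (Q i)).
Proof.
move=> P_ge0 Q_ge0 PQ; rewrite mulr_suml -sumrN; apply: ler_sum => i _.
have [->|Pi] := eqVneq (P i) 0; first by rewrite !mul0r.
have Qi_gt0 : 0 < Q i by rewrite lt_def PQ // Q_ge0.
have Qi_le : Q i <= \sum_j Q j by rewrite (bigD1 i) //= lerDl sumr_ge0.
by rewrite lerN2 ler_wpM2l // ler_ln ?posrE // (lt_le_trans Qi_gt0).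
Qed.

Context {T : finType}.
Implicit Types p q : T -> R.

(* Meaningful only when the support of p lies in that of q, as [ln 0 = 0]. *)
Definition rxent p q := \sum_x - (p x * ln (q x)).

Lemma xent_ge0 p q :
  (forall x, 0 <= p x) -> (forall x, q x <= 1) -> (0 <= xent p q)%E.
Proof.
move=> p_ge0 q_le1; apply: sume_ge0 => x _; case: ifP => // _; case: ifP => // _.
by rewrite lee_fin oppr_ge0 mulr_ge0_le0 // ln_le0.
Qed.

Lemma xent_EFin p q : (forall x, p x != 0 -> q x != 0) -> xent p q = (rxent p q)%:E.
Proof.
move=> pq; rewrite /xent /rxent -sumEFin; apply: eq_bigr => x _.
have [->|px] := eqVneq (p x) 0; first by rewrite mul0r oppr0.
by rewrite (negPf (pq x px)).
Qed.

Lemma xent_pinfty {p q} {x : T} : p x != 0 -> q x = 0 -> xent p q = +oo%E.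
Proof.
move=> px qx; apply/esum_eqyP => [y _|]; first by case: ifP => // _; case: ifP.
by exists x; rewrite mem_index_enum (negPf px) qx eqxx.
Qed.

End Distributions.

Section MixtureCrossEntropy.
Context {R : realType} {Z : finType} {m n : nat}
  {TB : 'I_m -> finType} {TX : 'I_n -> finType} {pZ : Z -> R}
  {pB qB : forall (z : Z) (b : 'I_m), TB b -> R}
  {pX : forall (z : Z) (i : 'I_n), TX i -> R}.
Hypotheses (dZ : is_dist pZ) (dB : forall z b, is_dist (pB z b))
  (dQ : forall z b, is_dist (qB z b)) (dX : forall z i, is_dist (pX z i)).

Local Notation conf := (bconf TB * oconf TX)%type.
Local Notation jr := (joint_rest pZ pX).

Let pZ_ge0 z : 0 <= pZ z. Proof. by case: dZ. Qed.
Let pB_ge0 z b y : 0 <= pB z b y. Proof. by case: (dB z b). Qed.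
Let qB_ge0 z b y : 0 <= qB z b y. Proof. by case: (dQ z b). Qed.

Lemma joint_rest_ge0 y : 0 <= jr y.
Proof. by rewrite mulr_ge0 // prodr_ge0 // => i _; case: (dX y.2 i). Qed.

Lemma sum_joint_rest z : \sum_(xo : oconf TX) jr (xo, z) = pZ z.
Proof. by rewrite /joint_rest /= -mulr_sumr sum_prod_dist // mulr1. Qed.

Lemma joint_rest_dist : is_dist jr.
Proof.
split; first exact: joint_rest_ge0.
by rewrite sum_pair exchange_big /=; under eq_bigr do rewrite sum_joint_rest; case: dZ.
Qed.

(* [component pB z x] is P_z(x) = p(x, z), and [component qB z x] is Q_z(x). *)
Definition component (rB : forall z b, TB b -> R) z (x : conf) :=
  (\prod_b rB z b (x.1 b)) * jr (x.2, z).

Lemma mixtureE rB x : mixture pZ rB pX x = \sum_z component rB z x.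
Proof. by apply: eq_bigr => z _; rewrite /component /joint_rest /= mulrAC mulrC. Qed.

Lemma component_ge0 rB z x : (forall b y, 0 <= rB z b y) -> 0 <= component rB z x.
Proof. by move=> rB_ge0; rewrite mulr_ge0 ?joint_rest_ge0 // prodr_ge0. Qed.

Lemma sum_component_bucket z b (f : forall b, TB b -> R) :
  \sum_x component pB z x * f b (x.1 b) = pZ z * \sum_y pB z b y * f b y.
Proof.
rewrite sum_pair exchange_big /= -sum_joint_rest mulr_suml; apply: eq_bigr => xo _.
rewrite -sum_prod_dist_marginal // mulr_sumr; apply: eq_bigr => xb _.
by rewrite /component /= mulrAC mulrC.
Qed.

Lemma sum_component_rest z (g : oconf TX * Z -> R) :
  \sum_x component pB z x * g (x.2, z) = \sum_xo jr (xo, z) * g (xo, z).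
Proof.
rewrite sum_pair exchange_big /=; apply: eq_bigr => xo _.
rewrite /component /=; under eq_bigr do rewrite -mulrA.
by rewrite -mulr_suml sum_prod_dist // mul1r.
Qed.

Lemma weighted_xent_pinfty {z b} {y : TB b} :
  0 < pZ z -> pB z b y != 0 -> qB z b y = 0 ->
  (\sum_b \sum_z (pZ z)%:E * xent (pB z b) (qB z b) = +oo)%E.
Proof.
move=> pZ_gt0 pBy qBy.
have term_ge0 b' z' : (0 <= (pZ z')%:E * xent (pB z' b') (qB z' b'))%E.
  by rewrite mule_ge0 ?lee_fin // xent_ge0 //; apply: dist_le1.
apply/esum_eqyP => [b' _|]; first by rewrite gt_eqF // (lt_le_trans ltNy0) // sume_ge0.
exists b; rewrite mem_index_enum; split => //.
apply/esum_eqyP => [z' _|]; first by rewrite gt_eqF // (lt_le_trans ltNy0).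
by exists z; rewrite mem_index_enum (xent_pinfty pBy qBy) mulry gtr0_sg // mul1e.
Qed.

Hypothesis supp : forall z b y, 0 < pZ z -> pB z b y != 0 -> qB z b y != 0.

Lemma component_support z x : component pB z x != 0 ->
  (forall b, 0 < qB z b (x.1 b)) /\ 0 < jr (x.2, z).
Proof.
rewrite /component mulf_eq0 negb_or => /andP[/prodf_neq0 pBx jr_neq0].
have pZ_gt0 : 0 < pZ z.
  by move: jr_neq0; rewrite /joint_rest /= mulf_eq0 negb_or lt_def pZ_ge0 andbT => /andP[].
split=> [b|]; last by rewrite lt_def jr_neq0 joint_rest_ge0.
by rewrite lt_def qB_ge0 andbT supp // pBx.
Qed.

Lemma component_gt0 z x : component pB z x != 0 -> 0 < component qB z x.
Proof.
by move=> /component_support[qB_gt0 jr_gt0]; rewrite /component mulr_gt0 // prodr_gt0.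
Qed.

Lemma neg_component_ln_split z x :
  - (component pB z x * ln (component qB z x)) =
  \sum_b component pB z x * - ln (qB z b (x.1 b)) +
  component pB z x * - ln (jr (x.2, z)).
Proof.
set c := component pB z x.
have [->|/component_support[qB_gt0 jr_gt0]] := eqVneq c 0.
  by rewrite big1 => [|b _]; rewrite !mul0r ?oppr0 ?addr0.
rewrite /component lnM ?posrE ?prodr_gt0 // ln_prod //.
by rewrite -mulr_sumr sumrN -mulrDr -opprD mulrN.
Qed.

Lemma sum_component_xentE :
  \sum_x \sum_z - (component pB z x * ln (component qB z x)) =
  \sum_b \sum_z pZ z * rxent (pB z b) (qB z b) + rxent jr jr.
Proof.
under eq_bigr do under eq_bigr do rewrite neg_component_ln_split.
rewrite exchange_big /=; under eq_bigr do rewrite big_split /= exchange_big.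
rewrite big_split /= exchange_big /=; congr (_ + _).
  apply: eq_bigr => b _; apply: eq_bigr => z _.
  rewrite (sum_component_bucket z b (fun b y => - ln (qB z b y))).
  by congr (_ * _); apply: eq_bigr => y _; rewrite mulrN.
rewrite /rxent [RHS]sum_pair [RHS]exchange_big /=; apply: eq_bigr => z _.
rewrite (sum_component_rest z (fun y => - ln (jr y))).
by apply: eq_bigr => xo _; rewrite mulrN.
Qed.

Lemma mixture_rxent_le :
  rxent (mixture pZ pB pX) (mixture pZ qB pX) <=
  \sum_b \sum_z pZ z * rxent (pB z b) (qB z b) + rxent jr jr.
Proof.
rewrite -sum_component_xentE; apply: ler_sum => x _; rewrite !mixtureE.
apply: neg_mul_ln_sum_le => z; [exact: component_ge0 | exact: component_ge0 |].
by move=> /component_gt0/lt0r_neq0.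
Qed.

Lemma mixture_support x : mixture pZ pB pX x != 0 -> mixture pZ qB pX x != 0.
Proof.
rewrite !mixtureE !psumr_neq0 => [/hasP[z _ /= pB_gt0]|z _|z _]; try exact: component_ge0.
by apply/hasP; exists z; rewrite ?mem_index_enum //= component_gt0 ?lt0r_neq0.
Qed.

Lemma weighted_xent_EFin z b :
  ((pZ z)%:E * xent (pB z b) (qB z b) = (pZ z * rxent (pB z b) (qB z b))%:E)%E.
Proof.
have [->|pZ_neq0] := eqVneq (pZ z) 0; first by rewrite mul0e mul0r.
by rewrite xent_EFin ?EFinM // => y; apply: supp; rewrite lt_def pZ_neq0 pZ_ge0.
Qed.

End MixtureCrossEntropy.

Theorem theorem1 (R : realType) (Z : finType) (m n : nat)
  (TB : 'I_m -> finType) (TX : 'I_n -> finType)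
  (pZ : Z -> R)
  (pB qB : forall (z : Z) (b : 'I_m), TB b -> R)
  (pX : forall (z : Z) (i : 'I_n), TX i -> R) :
  is_dist pZ ->
  (forall z b, is_dist (pB z b)) ->
  (forall z b, is_dist (qB z b)) ->
  (forall z i, is_dist (pX z i)) ->
  (xent (mixture pZ pB pX) (mixture pZ qB pX) <=
   \sum_(b < m) \sum_(z : Z) (pZ z)%:E * xent (pB z b) (qB z b)
   + ent (joint_rest pZ pX))%E.
Proof.
move=> dZ dB dQ dX.
have [[z [b [y [pZ_gt0 pBy qBy]]]]|no_escape] := pselect (exists z b (y : TB b),
  [/\ 0 < pZ z, pB z b y != 0 & qB z b y = 0]).
  have [jr_ge0 _] := joint_rest_dist dZ dX.
  have ent_ge0 : (0 <= ent (joint_rest pZ pX))%E.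
    by apply: xent_ge0 => //; exact/dist_le1/joint_rest_dist.
  rewrite (weighted_xent_pinfty dZ dB dQ pZ_gt0 pBy qBy) addye ?leey //.
  by rewrite gt_eqF // (lt_le_trans ltNy0).
have supp z b y : 0 < pZ z -> pB z b y != 0 -> qB z b y != 0.
  by move=> pZ_gt0 pBy; apply/eqP => qBy; apply: no_escape; exists z, b, y.
rewrite /ent !xent_EFin //; last exact: mixture_support.
under eq_bigr do under eq_bigr do rewrite weighted_xent_EFin //.
under eq_bigr do rewrite sumEFin.
by rewrite sumEFin -EFinD lee_fin mixture_rxent_le.
Qed.
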